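(* Let $r>1$ and integers $N\ge1$, $K>2$, and let $L(r,K,N)$ and $U(r,K,N)$ denote respectively $\frac{\gamma_1^*(r,K,N)}{\frac{r^N-(r-1)^N}{r^{N-1}}+\gamma_1^*(r,K,N)}$ and $\frac{\gamma_2^*(r,K,N)}{\frac{r^N-(r-1)^N}{r^{N-1}}+\gamma_2^*(r,K,N)}$, where $\gamma_1^*(r,K,N)=N\sum_{i=N}^\infty\frac1i(1-\frac1r)^i(1-\frac1{K-1})^i$ and $\gamma_2^*(r,K,N)=N\sum_{i=N}^\infty\frac1i(1-\frac1r)^i$. Then: (i) for fixed $r,N$, $U(r,K,N)-L(r,K,N)\to0$ as $K\to\infty$; (ii) for fixed $r,K$, $\lim_{N\to\infty}\eta(r,K,N)=0$; (iii) $\lim_{r\to\infty}\left(\lim_{K\to\infty}\eta(r,K,N)\right)=1$; (iv) for fixed $r,K$, $\eta(r,K,N)=O\big((1-1/r)^N\big)$ as $N\to\infty$.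
   Context: Single item auction with $N$ buyers whose values are i.i.d., each taking values $0<x^1<\dots<x^K$ with probabilities $p^i>0$, $\sum_ip^i=1$. Let $z^i=(\sum_{j=1}^ip^j)^N-(\sum_{j=1}^{i-1}p^j)^N$ and reserve index $t(x,p)=\max\{i: i\in\arg\max_{1\le k\le K}x^k\sum_{j=k}^Kp^j\}$. The efficiency loss ratio of the welfare-maximizing revenue-optimal auction is $\mathrm{ELR}_N(x,p)=\sum_{i=1}^{t(x,p)-1}z^ix^i/\sum_{i=1}^Kz^ix^i$. $\eta(r,K,N)$ is the supremum of $\mathrm{ELR}_N(x,p)$ over all such $p$ and all $x$ with $0<x^1<\dots<x^K\le rx^1$. *)

From HB Require Import structures.
From mathcomp Require Import all_boot all_order all_algebra.
From mathcomp Require Import all_classical all_reals all_analysis.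
Set Implicit Arguments. Unset Strict Implicit. Unset Printing Implicit Defensive.
Import Order.TTheory GRing.Theory Num.Theory.
Import numFieldNormedType.Exports.
Local Open Scope classical_set_scope.
Local Open Scope ring_scope.

Section Auction.
Variable R : realType.

(* Values x 1 < ... < x K and probabilities p 1, ..., p K (indices 1..K;
   values of x, p outside 1..K are irrelevant). *)

Definition cumP (p : nat -> R) (i : nat) : R := \sum_(1 <= j < i.+1) p j.

Definition zcoef (N : nat) (p : nat -> R) (i : nat) : R :=
  (cumP p i) ^+ N - (cumP p i.-1) ^+ N.

Definition rev (K : nat) (x p : nat -> R) (k : nat) : R :=
  x k * \sum_(k <= j < K.+1) p j.

(* t(x,p) = largest maximizer of rev over 1 <= k <= K *)
Definition reserve (K : nat) (x p : nat -> R) : nat :=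
  \max_(1 <= i < K.+1 |
          [forall k : 'I_K.+1, (0 < (k : nat))%N ==> (rev K x p k <= rev K x p i)]) i.

Definition ELR (K N : nat) (x p : nat -> R) : R :=
  (\sum_(1 <= i < reserve K x p) zcoef N p i * x i) /
  (\sum_(1 <= i < K.+1) zcoef N p i * x i).

Definition admissible (r : R) (K : nat) (x p : nat -> R) : Prop :=
  (forall i, (1 <= i <= K)%N -> 0 < p i) /\
  \sum_(1 <= i < K.+1) p i = 1 /\
  0 < x 1%N /\
  (forall i, (1 <= i < K)%N -> x i < x i.+1) /\
  x K <= r * x 1%N.

Definition etaELR (r : R) (K N : nat) : R :=
  sup [set e | exists x p : nat -> R, admissible r K x p /\ e = ELR K N x p].

Definition gamma1 (r : R) (K N : nat) : R :=
  N%:R * \big[+%R/0]_(N <= i <oo) (i%:R^-1 * (1 - r^-1) ^+ i * (1 - (K%:R - 1)^-1) ^+ i).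

Definition gamma2 (r : R) (K N : nat) : R :=
  N%:R * \big[+%R/0]_(N <= i <oo) (i%:R^-1 * (1 - r^-1) ^+ i).

Definition base (r : R) (N : nat) : R := (r ^+ N - (r - 1) ^+ N) / r ^+ N.-1.

Definition Lb (r : R) (K N : nat) : R := gamma1 r K N / (base r N + gamma1 r K N).
Definition Ub (r : R) (K N : nat) : R := gamma2 r K N / (base r N + gamma2 r K N).

End Auction.

(** If [t] is the reserve index, posting [x t] earns at least as much as posting the lowest
    value, [x t (1 - F (t-1)) >= x 1]; as [x t <= r x 1] this forces [F (t-1) <= 1 - 1/r].
    The welfare lost below the reserve is at most [r x 1 F (t-1)^N] while the total welfare is
    at least [x 1], hence [ELR <= r (1 - 1/r)^N]: this gives (ii) and (iv).

    Splitting the lowest atom of an instance into two nearby atoms gives an admissible instance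
    with one more value, the same reserve (shifted by one) and the same nonnegative amount added
    to lost and total welfare; so [eta] is nondecreasing in [K], bounded by 1, and converges.
    The equal-revenue instance [x i = i], [F i = 1 - 1/(i+1)] is admissible as soon as [K <= r]
    and loses all but the top value, with [ELR >= 1 - N / H_K]; since [H_K] diverges, (iii).

    Finally [g |-> g / (b + g)] is [1/b]-Lipschitz on nonnegative reals and
    [0 <= gamma2 - gamma1 <= N r / (K - 1)], which gives (i). *)

From Pilot Require Import Defs.
From HB Require Import structures.
From mathcomp Require Import all_boot all_order all_algebra.
From mathcomp Require Import all_classical all_reals all_analysis.
From mathcomp Require Import ring lra.
Import Order.TTheory GRing.Theory Num.Theory.
Import numFieldNormedType.Exports.
Local Open Scope classical_set_scope.
Local Open Scope ring_scope.
Set Implicit Arguments. Unset Strict Implicit. Unset Printing Implicit Defensive.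

Section RealInequalities.
Variable R : realFieldType.

Lemma bernoulli_le (c : R) n : 0 <= c <= 1 -> 1 - c ^+ n <= n%:R * (1 - c).
Proof.
move=> /andP[c0 c1]; elim: n => [|n IH]; first by rewrite expr0 subrr mul0r.
have -> : 1 - c ^+ n.+1 = (1 - c ^+ n) + c ^+ n * (1 - c) by rewrite exprSr; ring.
rewrite -nat1r mulrDl mul1r addrC lerD // ler_piMl ?subr_ge0 //.
exact: exprn_ile1.
Qed.

Lemma invr_nat_le1 i : i%:R^-1 <= 1 :> R.
Proof. by case: i => [|i]; rewrite ?invr0 ?ler01 // invf_le1 ?ler1n. Qed.

Lemma ratio_le1 (a b : R) : 0 <= a <= b -> a / b <= 1.
Proof.
move=> /andP[a0 ab]; have [->|b_neq0] := eqVneq b 0; first by rewrite invr0 mulr0.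
by rewrite ler_pdivrMr ?mul1r // lt_neqAle eq_sym b_neq0 (le_trans a0).
Qed.

Lemma ler_ratio_add (a b d : R) : 0 <= a -> a <= b -> 0 <= d ->
  a / b <= (a + d) / (b + d).
Proof.
move=> a0 ab d0; have [->|b_neq0] := eqVneq b 0.
  by rewrite invr0 mulr0 divr_ge0 // addr_ge0.
have b_gt0 : 0 < b by rewrite lt_neqAle eq_sym b_neq0 (le_trans a0).
have bd_gt0 : 0 < b + d by rewrite ltr_wpDr.
by rewrite ler_pdivrMr // mulrAC ler_pdivlMr //; nra.
Qed.

Lemma ratio_diff_le (b g1 g2 : R) : 0 < b -> 0 <= g1 -> g1 <= g2 ->
  0 <= g2 / (b + g2) - g1 / (b + g1) <= (g2 - g1) / b.
Proof.
move=> b0 g10 g12.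
have bg1 : 0 < b + g1 by rewrite ltr_wpDr.
have bg2 : 0 < b + g2 by rewrite ltr_wpDr // (le_trans g10).
have -> : g2 / (b + g2) - g1 / (b + g1) = (g2 - g1) / b * (b / (b + g1) * (b / (b + g2))).
  by field; rewrite !gt_eqF.
have g21 : 0 <= (g2 - g1) / b by rewrite divr_ge0 ?subr_ge0 // ltW.
have f10 : 0 <= b / (b + g1) by rewrite divr_ge0 ?ltW.
have f20 : 0 <= b / (b + g2) by rewrite divr_ge0 ?ltW.
have f11 : b / (b + g1) <= 1 by rewrite ler_pdivrMr // mul1r lerDl.
have f21 : b / (b + g2) <= 1 by rewrite ler_pdivrMr // mul1r lerDl (le_trans g10).
have f0 : 0 <= b / (b + g1) * (b / (b + g2)) by exact: mulr_ge0.
have f1 : b / (b + g1) * (b / (b + g2)) <= 1 by exact: mulr_ile1.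
by apply/andP; split; [exact: mulr_ge0 | exact: ler_piMr].
Qed.

Lemma sum_geometric_le (q : R) m n : 0 <= q < 1 ->
  \sum_(m <= i < n) q ^+ i <= (1 - q)^-1.
Proof.
move=> /andP[q0 q1]; have q1' : 0 < 1 - q by rewrite subr_gt0.
rewrite -(ler_pM2l q1') mulfV ?gt_eqF // big_distrr /=.
have [mn|nm] := leqP m n; last by rewrite big_geq ?ler01 // ltnW.
rewrite (@telescope_sumr_eq _ _ _ (fun i => - q ^+ i) _ mn) => [|k _]; last by rewrite exprS; ring.
by rewrite opprK addrC lerBlDr (le_trans (exprn_ile1 _ q0 (ltW q1))) // lerDl exprn_ge0.
Qed.

Lemma one_sub_invr_ge0 (r : R) : 1 <= r -> 0 <= 1 - r^-1.
Proof. by move=> r1; rewrite subr_ge0 invf_le1 // (lt_le_trans ltr01 r1). Qed.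

Lemma one_sub_invr_lt1 (r : R) : 1 < r -> 0 <= 1 - r^-1 < 1.
Proof.
move=> r1; rewrite one_sub_invr_ge0 ?ltW //=.
by rewrite ltrBlDl ltrDr invr_gt0 (lt_trans ltr01).
Qed.

End RealInequalities.

Section Auction.
Variable R : realType.
Implicit Types (x p : nat -> R) (r : R).

Lemma cumP0 p : cumP p 0 = 0. Proof. by rewrite /cumP big_geq. Qed.

Lemma cumPS p i : cumP p i.+1 = cumP p i + p i.+1.
Proof. by rewrite /cumP big_nat_recr. Qed.

Lemma cumP_cat p i j : (i <= j)%N -> cumP p j = cumP p i + \sum_(i.+1 <= k < j.+1) p k.
Proof. by move=> ij; rewrite /cumP (big_cat_nat _ (n := i.+1)). Qed.

Lemma sum_zcoef N p n : (0 < N)%N ->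
  \sum_(1 <= i < n.+1) zcoef N p i = cumP p n ^+ N.
Proof.
case: N => // N _; rewrite big_add1 /= (telescope_sumr_eq (fun i => cumP p i ^+ N.+1)) //.
by rewrite cumP0 [0 ^+ _]exprS mul0r subr0.
Qed.

Lemma revE K x p k : cumP p K = 1 -> (1 <= k <= K.+1)%N ->
  Defs.rev K x p k = x k * (1 - cumP p k.-1).
Proof.
case: k => // k cumK /andP[_ kK]; rewrite /Defs.rev (cumP_cat p (kK : (k <= K)%N)) in cumK.
by congr (_ * _); rewrite -cumK /= addrAC subrr add0r.
Qed.

Definition is_reserve K x p t :=
  [/\ (1 <= t <= K)%N,
      forall k, (1 <= k <= K)%N -> Defs.rev K x p k <= Defs.rev K x p t &
      forall k, (t < k <= K)%N -> Defs.rev K x p k < Defs.rev K x p t].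

Section Reserve.
Variables (K : nat) (x p : nat -> R).

Let maximal i := [forall k : 'I_K.+1, (0 < (k : nat))%N ==> (Defs.rev K x p k <= Defs.rev K x p i)].

Let maximalP i : reflect (forall k, (1 <= k <= K)%N -> Defs.rev K x p k <= Defs.rev K x p i)
  (maximal i).
Proof.
apply: (iffP forallP) => [h k /andP[k1 kK]|h k].
  by have /implyP := h (Ordinal (kK : (k < K.+1)%N)); exact.
by apply/implyP => k1; apply: h; rewrite k1; exact: (ltn_ord k).
Qed.

Lemma reserveP : reserve K x p = 0%N \/ is_reserve K x p (reserve K x p).
Proof.
have : reserve K x p = 0%N \/ (1 <= reserve K x p <= K)%N /\ maximal (reserve K x p).
  rewrite /reserve big_nat_cond.
  apply: (big_ind (fun m => m = 0%N \/ (1 <= m <= K)%N /\ maximal m)); first by left.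
    by move=> m n Pm Pn; rewrite /maxn; case: ifP.
  by move=> i /andP[/andP[i1 iK] mi]; right; rewrite i1 -ltnS.
case=> [->|[tK /maximalP t_max]]; [by left | right; split => // k /andP[tk kK]].
rewrite ltNge; apply/negP => t_le_k.
have k_max : maximal k.
  by apply/maximalP => j jK; exact: le_trans (t_max j jK) t_le_k.
have k_mem : k \in index_iota 1 K.+1 by rewrite mem_index_iota ltnS kK (leq_trans _ tk).
by have := leq_bigmax_seq (F := fun i => i) k k_mem k_max; rewrite leqNgt tk.
Qed.

Lemma reserve_eq t : is_reserve K x p t -> reserve K x p = t.
Proof.
move=> [/andP[t1 tK] t_max t_strict]; apply/eqP; rewrite eqn_leq; apply/andP; split.
  apply/bigmax_leqP_seq => i; rewrite mem_index_iota ltnS => /andP[i1 iK] /maximalP i_max.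
  rewrite leqNgt; apply/negP => ti.
  by have := t_strict i; rewrite ti iK => /(_ isT); rewrite ltNge i_max ?t1.
by apply: (leq_bigmax_seq (F := fun i => i) t); [rewrite mem_index_iota ltnS t1 | exact/maximalP].
Qed.

Lemma reserve_leq : (reserve K x p <= K)%N.
Proof. by case: reserveP => [->|[/andP[]]]. Qed.

End Reserve.

Definition welfare_below N x p n := \sum_(1 <= i < n) zcoef N p i * x i.

Lemma ELRE K N x p :
  ELR K N x p = welfare_below N x p (reserve K x p) / welfare_below N x p K.+1.
Proof. by []. Qed.

Lemma welfare_belowS N x p n : (0 < n)%N ->
  welfare_below N x p n.+1 = welfare_below N x p n + zcoef N p n * x n.
Proof. by move=> n_gt0; rewrite /welfare_below big_nat_recr. Qed.

Section Admissible.
Variables (r : R) (K : nat) (x p : nat -> R).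
Hypothesis adm : admissible r K x p.

Lemma adm_p_gt0 i : (1 <= i <= K)%N -> 0 < p i. Proof. by case: adm => p_gt0 _; exact: p_gt0. Qed.

Lemma adm_cumPK : cumP p K = 1. Proof. by case: adm => _ [sum1 _]; exact: sum1. Qed.

Lemma adm_K_gt0 : (0 < K)%N.
Proof. by move: adm_cumPK; case: K => //; rewrite cumP0 => /eqP; rewrite eq_sym oner_eq0. Qed.

Lemma adm_x1_gt0 : 0 < x 1. Proof. by case: adm => _ [_ [x1_gt0 _]]. Qed.

Lemma adm_x_le i j : (1 <= i)%N -> (i <= j <= K)%N -> x i <= x j.
Proof.
have [_ [_ [_ [x_lt _]]]] := adm; move=> i1; elim: j => [|j IH] /andP[ij jK].
  by move: ij; rewrite leqn0 => /eqP i0; rewrite i0 in i1.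
move: ij; rewrite leq_eqVlt => /orP[/eqP->//|ij].
apply: le_trans (IH _) (ltW (x_lt _ _)); first by rewrite -ltnS ij ltnW.
by rewrite (leq_trans i1 (ij : (i <= j)%N)).
Qed.

Lemma adm_x_bounds i : (1 <= i <= K)%N -> x 1 <= x i <= r * x 1.
Proof.
have [_ [_ [_ [_ xK]]]] := adm; move=> /andP[i1 iK]; apply/andP; split.
  by apply: adm_x_le; rewrite // i1 iK.
by apply: le_trans xK; apply: adm_x_le; rewrite // iK leqnn.
Qed.

Lemma adm_r_ge1 : 1 <= r.
Proof.
have /andP[_] := adm_x_bounds (adm_K_gt0 : (1 <= 1 <= K)%N).
by rewrite -{1}(mul1r (x 1)) ler_pM2r // adm_x1_gt0.
Qed.

Lemma adm_cumP_le i j : (i <= j <= K)%N -> cumP p i <= cumP p j.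
Proof.
move=> /andP[ij jK]; rewrite (cumP_cat p ij) lerDl big_nat_cond sumr_ge0 // => k.
move=> /andP[/andP[ik kj] _]; apply/ltW/adm_p_gt0.
by rewrite (leq_trans _ ik) //= -ltnS (leq_trans kj).
Qed.

Lemma adm_cumP_ge0 i : (i <= K)%N -> 0 <= cumP p i.
Proof. by move=> iK; rewrite -(cumP0 p) adm_cumP_le. Qed.

Lemma zcoef_ge0 N i : (1 <= i <= K)%N -> 0 <= zcoef N p i.
Proof.
case: i => // i /andP[_ iK]; rewrite subr_ge0 lerXn2r ?nnegrE ?adm_cumP_ge0 ?(ltnW iK) //.
by rewrite adm_cumP_le // leqnSn.
Qed.

Lemma welfare_below_le N m n : (m <= n <= K.+1)%N ->
  0 <= welfare_below N x p m <= welfare_below N x p n.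
Proof.
have term_ge0 i : (1 <= i <= K)%N -> 0 <= zcoef N p i * x i.
  move=> iK; rewrite mulr_ge0 ?zcoef_ge0 //.
  by case/andP: (adm_x_bounds iK) => /(le_trans (ltW adm_x1_gt0)).
have sum_ge0 a b : (0 < a)%N -> (b <= K.+1)%N -> 0 <= \sum_(a <= i < b) zcoef N p i * x i.
  move=> a_gt0 bK; rewrite big_nat_cond sumr_ge0 // => i /andP[/andP[ai ib] _].
  by rewrite term_ge0 // (leq_trans a_gt0 ai) /= -ltnS (leq_trans ib).
move=> /andP[mn nK]; rewrite /welfare_below.
have [m0|m_gt0] := posnP m; first by rewrite m0 big_geq // lexx; exact: sum_ge0.
rewrite (big_cat_nat _ mn) //=; apply/andP; split; first exact: sum_ge0 (leq_trans mn nK).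
by rewrite lerDl; exact: sum_ge0.
Qed.

Lemma welfare_total_ge N : (0 < N)%N -> x 1 <= welfare_below N x p K.+1.
Proof.
move=> N_gt0; apply: (@le_trans _ _ (\sum_(1 <= i < K.+1) zcoef N p i * x 1)).
  by rewrite -big_distrl /= sum_zcoef // adm_cumPK expr1n mul1r.
rewrite big_nat_cond [leRHS]big_nat_cond; apply: ler_sum => i /andP[iK _].
by rewrite ler_wpM2l ?zcoef_ge0 //; case/andP: (adm_x_bounds iK).
Qed.

Lemma welfare_below_le_cumP N t : (0 < N)%N -> (1 <= t <= K.+1)%N ->
  welfare_below N x p t <= r * x 1 * cumP p t.-1 ^+ N.
Proof.
case: t => // t N_gt0 /andP[_ tK]; rewrite /welfare_below.
apply: (@le_trans _ _ (\sum_(1 <= i < t.+1) zcoef N p i * (r * x 1))).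
  rewrite big_nat_cond [leRHS]big_nat_cond; apply: ler_sum => i /andP[/andP[i1 it] _].
  have iK : (1 <= i <= K)%N by rewrite i1 -ltnS (leq_trans it tK).
  by rewrite ler_wpM2l ?zcoef_ge0 //; case/andP: (adm_x_bounds iK).
by rewrite -big_distrl /= sum_zcoef // mulrC.
Qed.

Let reserve_le : (reserve K x p <= K.+1 <= K.+1)%N.
Proof. by rewrite leqnn andbT; exact/leqW/reserve_leq. Qed.

Lemma cumP_reserve_le : (0 < reserve K x p)%N -> cumP p (reserve K x p).-1 <= 1 - r^-1.
Proof.
case: (reserveP K x p) => [->//|[tK t_max _] _].
set t := reserve K x p in tK t_max *.
have r_gt0 : 0 < r := lt_le_trans ltr01 adm_r_ge1.
have K1 : (1 <= 1 <= K)%N := adm_K_gt0.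
have tK1 : (1 <= t <= K.+1)%N by case/andP: tK => -> /leqW.
have rev1_le : x 1 <= x t * (1 - cumP p t.-1).
  have := t_max 1%N K1.
  by rewrite (revE x adm_cumPK (isT : (1 <= 1 <= K.+1)%N)) (revE x adm_cumPK tK1) cumP0 subr0 mulr1.
have F_le1 : cumP p t.-1 <= 1.
  rewrite -adm_cumPK; apply: adm_cumP_le.
  by rewrite leqnn andbT (leq_trans (leq_pred t)) //; case/andP: tK.
have : x 1 <= r * x 1 * (1 - cumP p t.-1).
  apply: (le_trans rev1_le); apply: ler_wpM2r; first by rewrite subr_ge0.
  by case/andP: (adm_x_bounds tK).
rewrite mulrAC -{1}(mul1r (x 1)) ler_pM2r ?adm_x1_gt0 // => le1.
by rewrite -(ler_pM2l r_gt0) mulrBr mulfV ?gt_eqF //; nra.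
Qed.

Lemma ELR_ge0 N : 0 <= ELR K N x p.
Proof.
have /andP[num_ge0 num_le] := welfare_below_le N reserve_le.
by rewrite ELRE; exact: divr_ge0 num_ge0 (le_trans num_ge0 num_le).
Qed.

Lemma ELR_le1 N : ELR K N x p <= 1.
Proof. by rewrite ELRE; exact: ratio_le1 (welfare_below_le N reserve_le). Qed.

Lemma ELR_le_geometric N : (0 < N)%N -> ELR K N x p <= r * (1 - r^-1) ^+ N.
Proof.
move=> N_gt0; have r_gt0 : 0 < r := lt_le_trans ltr01 adm_r_ge1.
have q_ge0 := one_sub_invr_ge0 adm_r_ge1.
have c_ge0 : 0 <= r * x 1 := mulr_ge0 (ltW r_gt0) (ltW adm_x1_gt0).
have num_le : welfare_below N x p (reserve K x p) <= r * x 1 * (1 - r^-1) ^+ N.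
  have [t0|t_gt0] := posnP (reserve K x p).
    by rewrite t0 /welfare_below big_geq //; exact: mulr_ge0 c_ge0 (exprn_ge0 _ q_ge0).
  apply: le_trans (welfare_below_le_cumP N_gt0 _) _.
    by case/andP: reserve_le => ->; rewrite t_gt0.
  rewrite ler_wpM2l // lerXn2r ?nnegrE ?cumP_reserve_le //.
  by rewrite adm_cumP_ge0 // (leq_trans (leq_pred _)) // reserve_leq.
have den_ge := welfare_total_ge N_gt0.
rewrite ELRE ler_pdivrMr ?(lt_le_trans adm_x1_gt0 den_ge) //; apply: le_trans num_le _.
by rewrite mulrAC ler_wpM2l // mulr_ge0 ?exprn_ge0 // ltW.
Qed.

End Admissible.

Section Eta.
Variables (r : R) (K N : nat).

Let ELRs := [set e | exists x p : nat -> R, admissible r K x p /\ e = ELR K N x p].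

Let ELRs_ub : has_ubound ELRs.
Proof. by exists 1 => _ [x [p [adm ->]]]; exact: (ELR_le1 adm). Qed.

Lemma etaELR_ge x p : admissible r K x p -> ELR K N x p <= etaELR r K N.
Proof. by move=> adm; apply: (ub_le_sup ELRs_ub); exists x, p. Qed.

Lemma etaELR_le b : 0 <= b ->
  (forall x p, admissible r K x p -> ELR K N x p <= b) -> etaELR r K N <= b.
Proof.
move=> b0 ELR_le; rewrite /etaELR -/ELRs.
have [->|/set0P ne] := eqVneq ELRs set0; first by rewrite sup0.
by apply: ge_sup => // _ [x [p [adm ->]]]; exact: ELR_le.
Qed.

Lemma etaELR_ge0 : 0 <= etaELR r K N.
Proof.
rewrite /etaELR -/ELRs; have [->|/set0P[e ELRs_e]] := eqVneq ELRs set0; first by rewrite sup0.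
apply: le_trans (ub_le_sup ELRs_ub ELRs_e); case: ELRs_e => x [p [adm ->]].
exact: (ELR_ge0 adm N).
Qed.

Lemma etaELR_le1 : etaELR r K N <= 1.
Proof. by apply: etaELR_le => // x p adm; exact: (ELR_le1 adm). Qed.

End Eta.

Lemma etaELR_le_geometric r K N : 1 <= r -> (0 < N)%N ->
  etaELR r K N <= r * (1 - r^-1) ^+ N.
Proof.
move=> r1 N_gt0; apply: etaELR_le => [|x p adm]; last exact: ELR_le_geometric.
exact: mulr_ge0 (le_trans ler01 r1) (exprn_ge0 _ (one_sub_invr_ge0 r1)).
Qed.

Lemma etaELR_cvg0 r K : 1 < r -> etaELR r K N @[N --> \oo] --> 0.
Proof.
move=> r1; apply: (@squeeze_cvgr _ _ _ _ (cst 0) (fun N => r * (1 - r^-1) ^+ N)).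
- near=> N; rewrite etaELR_ge0 /= etaELR_le_geometric ?ltW //.
  by near: N; exact: nbhs_infty_gt.
- exact: cvg_cst.
- rewrite -(mulr0 r); apply: cvgMl_tmp; apply: cvg_expr.
  by have /andP[q_ge0 q_lt1] := one_sub_invr_lt1 r1; rewrite ger0_norm.
Unshelve. all: by end_near. Qed.

Lemma etaELR_bigO r K : 1 < r ->
  (fun N => etaELR r K N) =O_\oo (fun N => (1 - r^-1) ^+ N).
Proof.
move=> r1; have q_ge0 := one_sub_invr_ge0 (ltW r1).
apply/eqOP; near=> k; near=> N.
rewrite ger0_norm ?etaELR_ge0 // ger0_norm ?exprn_ge0 //.
apply: le_trans (etaELR_le_geometric K (ltW r1) _) _; first by near: N; exact: nbhs_infty_gt.
apply: ler_wpM2r; first exact: exprn_ge0.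
by near: k; apply: nbhs_pinfty_ge; rewrite num_real.
Unshelve. all: by end_near. Qed.

End Auction.

Section Gamma.
Variable R : realType.
Implicit Types r : R.

Lemma lim_sum_nneg_compare (f g : nat -> R) m M D :
  (forall i, 0 <= f i <= g i) -> (forall n, \sum_(m <= i < n) g i <= M) ->
  (forall n, \sum_(m <= i < n) (g i - f i) <= D) ->
  [/\ 0 <= \big[+%R/0]_(m <= i <oo) f i,
      \big[+%R/0]_(m <= i <oo) f i <= \big[+%R/0]_(m <= i <oo) g i &
      \big[+%R/0]_(m <= i <oo) g i - \big[+%R/0]_(m <= i <oo) f i <= D].
Proof.
move=> fg gM gfD.
have f_ge0 i : 0 <= f i by case/andP: (fg i).
have g_ge0 i : 0 <= g i by case/andP: (fg i) => /le_trans; apply.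
have Sfg n : \sum_(m <= i < n) f i <= \sum_(m <= i < n) g i.
  by apply: ler_sum => i _; case/andP: (fg i).
have cvg_sum (h : nat -> R) : (forall i, 0 <= h i) ->
    (forall n, \sum_(m <= i < n) h i <= M) -> cvgn (fun n => \sum_(m <= i < n) h i).
  move=> h_ge0 hM; apply: nondecreasing_is_cvgn; first exact: nondecreasing_series.
  by exists M => _ [n _ <-].
have cf := cvg_sum f f_ge0 (fun n => le_trans (Sfg n) (gM n)).
have cg := cvg_sum g g_ge0 gM.
split.
- by apply: limr_ge cf _; apply: nearW => n; exact: sumr_ge0.
- by apply: ler_lim cf cg _; apply: nearW.
- rewrite -limB //; apply: limr_le; first exact: is_cvgB.
  by apply: nearW => n; rewrite /= ?fctE -sumrB.
Qed.

Lemma gamma_summand_bounds (q c : R) i : 0 <= q -> 0 <= c <= 1 ->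
  [/\ 0 <= i%:R^-1 * q ^+ i * c ^+ i <= i%:R^-1 * q ^+ i,
      i%:R^-1 * q ^+ i <= q ^+ i &
      i%:R^-1 * q ^+ i - i%:R^-1 * q ^+ i * c ^+ i <= q ^+ i * (1 - c)].
Proof.
move=> q_ge0 /andP[c_ge0 c_le1].
have a_ge0 : 0 <= i%:R^-1 * q ^+ i.
  by apply: mulr_ge0; [rewrite invr_ge0 ler0n | exact: exprn_ge0].
split.
- apply/andP; split; first exact: mulr_ge0 a_ge0 (exprn_ge0 _ c_ge0).
  by apply: ler_piMr; [exact: a_ge0 | exact: exprn_ile1].
- by apply: ler_piMl; [exact: exprn_ge0 | exact: invr_nat_le1].
have -> : i%:R^-1 * q ^+ i - i%:R^-1 * q ^+ i * c ^+ i = q ^+ i * (i%:R^-1 * (1 - c ^+ i)).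
  by ring.
apply: ler_wpM2l; first exact: exprn_ge0.
case: i {a_ge0} => [|i]; first by rewrite invr0 mul0r subr_ge0.
by rewrite ler_pdivrMl ?ltr0n // bernoulli_le ?c_ge0.
Qed.

Lemma gamma_bounds r K N : 1 < r -> (2 <= K)%N ->
  [/\ 0 <= gamma1 r K N, gamma1 r K N <= gamma2 r K N &
      gamma2 r K N - gamma1 r K N <= N%:R * r / (K%:R - 1)].
Proof.
move=> r1 K2; pose q : R := 1 - r^-1; pose c : R := 1 - (K%:R - 1)^-1.
have /andP[q_ge0 q_lt1] := one_sub_invr_lt1 r1.
have K1 : 1 <= K%:R - 1 :> R by rewrite lerBrDr (_ : 1 + 1 = 2%:R :> R) // ler_nat.
have c01 : 0 <= c <= 1.
  by rewrite /c one_sub_invr_ge0 //= lerBlDr lerDl invr_ge0 (le_trans ler01 K1).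
have Sq n : \sum_(N <= i < n) q ^+ i <= r.
  have -> : r = (1 - q)^-1 by rewrite /q opprB addrC subrK invrK.
  by apply: sum_geometric_le; rewrite q_ge0.
have terms i : 0 <= i%:R^-1 * q ^+ i * c ^+ i <= i%:R^-1 * q ^+ i.
  by case: (gamma_summand_bounds i q_ge0 c01).
have Sa n : \sum_(N <= i < n) i%:R^-1 * q ^+ i <= r.
  by apply: le_trans (Sq n); apply: ler_sum => i _; case: (gamma_summand_bounds i q_ge0 c01).
have Sdiff n :
    \sum_(N <= i < n) (i%:R^-1 * q ^+ i - i%:R^-1 * q ^+ i * c ^+ i) <= (1 - c) * r.
  apply: (@le_trans _ _ (\sum_(N <= i < n) q ^+ i * (1 - c))).
    by apply: ler_sum => i _; case: (gamma_summand_bounds i q_ge0 c01).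
  rewrite -big_distrl /= mulrC; apply: ler_wpM2l; last exact: Sq.
  by rewrite subr_ge0; case/andP: c01.
have [g1_ge0 g12 g21] := lim_sum_nneg_compare terms Sa Sdiff.
rewrite /gamma1 /gamma2 -/q -/c; split.
- exact: mulr_ge0 (ler0n _ _) g1_ge0.
- exact: ler_wpM2l (ler0n _ _) _ _ g12.
- rewrite -mulrBr -mulrA; apply: ler_wpM2l; first exact: ler0n.
  by apply: le_trans g21 _; rewrite /c opprB addrC subrK mulrC.
Qed.

Lemma base_gt0 r N : 1 < r -> (0 < N)%N -> 0 < base r N.
Proof.
move=> r1 N_gt0; have r_gt0 : 0 < r := lt_trans ltr01 r1.
apply: divr_gt0; last exact: exprn_gt0.
rewrite subr_gt0 ltrXn2r -?lt0n //; first by rewrite subr_ge0 ltW.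
by rewrite ltrBlDr ltrDl.
Qed.

Lemma inv_pred_natr_cvg0 : (K%:R - 1 : R)^-1 @[K --> \oo] --> 0.
Proof.
rewrite -(cvg_shiftn 2); have -> : [sequence ((n + 2)%N%:R - 1 : R)^-1]_n = harmonic.
  by apply/funext => n /=; rewrite addn2 -natr1 addrK.
exact: cvg_harmonic.
Qed.

Lemma Ub_sub_Lb_cvg0 r N : 1 < r -> (0 < N)%N -> Ub r K N - Lb r K N @[K --> \oo] --> 0.
Proof.
move=> r1 N_gt0; have b_gt0 := base_gt0 r1 N_gt0.
apply: (@squeeze_cvgr _ _ _ _ (cst 0) (fun K => N%:R * r / base r N * (K%:R - 1)^-1)).
- near=> K; have K2 : (2 <= K)%N by near: K; exact: nbhs_infty_ge.
  have [g1_ge0 g12 g21] := gamma_bounds N r1 K2.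
  have /andP[diff_ge0 diff_le] := ratio_diff_le b_gt0 g1_ge0 g12.
  rewrite /Ub /Lb /= diff_ge0 /=; apply: le_trans diff_le _.
  rewrite mulrAC; apply: ler_wpM2r; [by rewrite invr_ge0 ltW | exact: g21].
- exact: cvg_cst.
- by rewrite -(mulr0 (N%:R * r / base r N)); apply: cvgMl_tmp; exact: inv_pred_natr_cvg0.
Unshelve. all: by end_near. Qed.

End Gamma.

Section Split.
Variable R : realType.
Implicit Types (x p : nat -> R) (r : R).

Definition split_first (f : nat -> R) (a b : R) (l : nat) : R :=
  if l == 1%N then a else if l == 2%N then b else f l.-1.

Lemma split_first1 (f : nat -> R) a b : split_first f a b 1 = a. Proof. by []. Qed.
Lemma split_first2 (f : nat -> R) a b : split_first f a b 2 = b. Proof. by []. Qed.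
Lemma split_first_ge3 (f : nat -> R) a b l : (2 < l)%N -> split_first f a b l = f l.-1.
Proof. by case: l => [|[|[|l]]]. Qed.

Section SplitFirst.
Variables (x p : nat -> R) (y a b : R).
Hypothesis ab : a + b = p 1.
Local Notation x' := (split_first x (x 1) y).
Local Notation p' := (split_first p a b).

Lemma cumP_split_first1 : cumP p' 1 = a.
Proof. by rewrite cumPS cumP0 add0r. Qed.

Lemma cumP_split_first l : cumP p' l.+2 = cumP p l.+1.
Proof.
elim: l => [|l IH]; first by rewrite cumPS cumP_split_first1 split_first2 ab cumPS cumP0 add0r.
by rewrite cumPS IH [RHS]cumPS.
Qed.

Lemma zcoef_split_first N l : zcoef N p' l.+3 = zcoef N p l.+2.
Proof. by rewrite /zcoef !cumP_split_first. Qed.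

Lemma welfare_below_split_first N m : (2 < m)%N ->
  welfare_below N x' p' m = welfare_below N x p m.-1 + (p 1 ^+ N - a ^+ N) * (y - x 1).
Proof.
case: m => [|[|[|m]]] // _; elim: m => [|m IH] /=; last first.
  rewrite welfare_belowS // IH [in RHS]welfare_belowS //.
  by rewrite zcoef_split_first split_first_ge3 // addrAC.
rewrite /welfare_below big_nat_recr //= !big_nat1 split_first1 split_first2 /zcoef.
rewrite cumP_split_first1 (cumP_split_first 0) !cumP0 cumPS cumP0 add0r; ring.
Qed.

Lemma rev_split_first K k : (2 < k)%N -> Defs.rev K.+1 x' p' k = Defs.rev K x p k.-1.
Proof.
case: k => [|[|[|k]]] // _; rewrite /Defs.rev split_first_ge3 // big_add1; congr (_ * _).
by apply: eq_big_nat => j /andP[kj _]; rewrite split_first_ge3 // ltnS (leq_trans _ kj).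
Qed.

Lemma rev_split_first1 K : (0 < K)%N -> Defs.rev K.+1 x' p' 1 = Defs.rev K x p 1.
Proof. by case: K => // K _; rewrite /Defs.rev; congr (_ * _); exact: cumP_split_first. Qed.

Lemma rev_split_first2 K : (0 < K)%N -> Defs.rev K.+1 x' p' 2 = y * (cumP p K - a).
Proof.
case: K => // K _; rewrite /Defs.rev split_first2; congr (_ * _).
have := cumP_cat p' (ltn0Sn K.+1); rewrite cumP_split_first cumP_split_first1 => ->.
by rewrite addrC addKr.
Qed.

End SplitFirst.

Lemma exists_split_weight (y g c : R) : 0 < y -> 0 < g -> 0 < c ->
  exists2 b, 0 < b < c & y * b <= g.
Proof.
move=> y_gt0 g_gt0 c_gt0; exists (Num.min (c / 2) (g / y)).
  by rewrite lt_min !divr_gt0 //= gt_min ltr_pdivrMr // ltr_pMr // ltr1n.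
by rewrite mulrC -ler_pdivlMr // ge_min lexx orbT.
Qed.

Section SplitAdmissible.
Variables (r : R) (K : nat) (x p : nat -> R) (y a b : R).
Hypotheses (adm : admissible r K x p) (K_gt1 : (1 < K)%N).
Hypotheses (a_gt0 : 0 < a) (b_gt0 : 0 < b) (ab : a + b = p 1).
Hypotheses (x1y : x 1 < y) (yx2 : y < x 2).
Local Notation x' := (split_first x (x 1) y).
Local Notation p' := (split_first p a b).

Lemma admissible_split_first : admissible r K.+1 x' p'.
Proof.
have [p_gt0 [_ [x1_gt0 [x_lt xK]]]] := adm.
split; last split; last split=> //; last split.
- by case=> [|[|[|i]]] // iK; apply: p_gt0.
- have K_gt0 : (0 < K)%N := ltnW K_gt1.
  by have := cumP_split_first ab K.-1; rewrite prednK // (adm_cumPK adm).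
- by case=> [|[|[|i]]] // iK; apply: x_lt.
- by rewrite split_first_ge3.
Qed.

Lemma reserve_split_first t : is_reserve K x p t -> (1 < t)%N ->
  y * (1 - a) <= Defs.rev K x p t -> is_reserve K.+1 x' p' t.+1.
Proof.
have K_gt0 := ltnW K_gt1; have cumK := adm_cumPK adm.
move=> [/andP[_ tK] t_max t_strict] t_gt1 rev2_le.
have rev_t : Defs.rev K.+1 x' p' t.+1 = Defs.rev K x p t by exact: rev_split_first.
split; first exact: tK.
  case=> [|[|[|k]]] // /andP[_ kK]; rewrite rev_t.
  - by rewrite rev_split_first1 // t_max.
  - by rewrite rev_split_first2 // cumK.
  - by rewrite rev_split_first // t_max.
move=> k /andP[tk kK]; rewrite rev_t rev_split_first ?(leq_ltn_trans t_gt1 (ltnW tk)) //.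
apply: t_strict; case: k tk kK => // k tk kK; apply/andP; split; [exact: tk | exact: kK].
Qed.

Lemma ELR_le_split_first N : (1 < reserve K x p)%N ->
  y * (1 - a) <= Defs.rev K x p (reserve K x p) -> ELR K N x p <= ELR K.+1 N x' p'.
Proof.
move=> t_gt1 rev2_le; case: (reserveP K x p) => [t0|t_res]; first by rewrite t0 in t_gt1.
have /andP[num_ge0 num_le] :
    0 <= welfare_below N x p (reserve K x p) <= welfare_below N x p K.+1.
  by apply: (welfare_below_le adm); rewrite leqnn andbT; exact/leqW/reserve_leq.
have a_le : a <= p 1 by rewrite -ab lerDl ltW.
have a_ge0 := ltW a_gt0; have p1_ge0 := le_trans a_ge0 a_le.
have D_ge0 : 0 <= (p 1 ^+ N - a ^+ N) * (y - x 1).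
  apply: mulr_ge0; last by rewrite subr_ge0 ltW.
  by rewrite subr_ge0; apply: lerXn2r; rewrite ?nnegrE.
rewrite !ELRE (reserve_eq (reserve_split_first t_res t_gt1 rev2_le)).
rewrite !welfare_below_split_first ?(ltnW K_gt1 : (2 < K.+2)%N) //=.
exact: ler_ratio_add.
Qed.

End SplitAdmissible.

Lemma ELR_le_split r K N x p : admissible r K x p -> (1 < reserve K x p)%N ->
  exists x' p', admissible r K.+1 x' p' /\ ELR K N x p <= ELR K.+1 N x' p'.
Proof.
move=> adm t_gt1; have [p_gt0 [_ [x1_gt0 [x_lt _]]]] := adm.
case: (reserveP K x p) => [t0|[/andP[_ tK] t_max _]]; first by rewrite t0 in t_gt1.
have K_gt1 : (1 < K)%N := leq_trans t_gt1 tK.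
have p1_gt0 : 0 < p 1 := p_gt0 1%N (ltnW K_gt1).
have p2_gt0 : 0 < p 2 := p_gt0 2%N K_gt1.
have x12 : x 1 < x 2 := x_lt 1%N K_gt1.
pose y := (x 1 + x 2) / 2; have [x1y yx2] : x 1 < y /\ y < x 2 by case: (midf_lt x12).
have S2_gt0 : 0 < 1 - p 1.
  have : cumP p 2 <= 1 by rewrite -(adm_cumPK adm); apply: (adm_cumP_le adm); rewrite K_gt1 leqnn.
  by rewrite cumPS cumPS cumP0 add0r; lra.
have rev2 : Defs.rev K x p 2 = x 2 * (1 - p 1).
  by rewrite (revE x (adm_cumPK adm) (ltnW K_gt1 : (1 <= 2 <= K.+1)%N)) /= cumPS cumP0 add0r.
have gap_gt0 : 0 < Defs.rev K x p (reserve K x p) - y * (1 - p 1).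
  by rewrite subr_gt0 (lt_le_trans _ (t_max 2%N _)) ?K_gt1 // rev2 ltr_pM2r.
(* the new atom [(y, e)] must not overtake the reserve: [y (1 - p 1 + e) <= rev t] *)
have [e /andP[e_gt0 e_lt] ye] := exists_split_weight (lt_trans x1_gt0 x1y) gap_gt0 p1_gt0.
have a_gt0 : 0 < p 1 - e by rewrite subr_gt0.
have ab : p 1 - e + e = p 1 by rewrite subrK.
exists (split_first x (x 1) y), (split_first p (p 1 - e) e); split.
  exact: admissible_split_first adm K_gt1 a_gt0 e_gt0 ab x1y yx2.
apply: (ELR_le_split_first (r := r)) => //.
by rewrite opprB addrCA mulrDr -lerBrDr.
Qed.

End Split.

Section EqualRevenue.
Variable R : realType.
Implicit Types r : R.

Lemma summation_by_parts_natr (G : nat -> R) n : G 0%N = 0 ->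
  \sum_(1 <= i < n.+1) (G i - G i.-1) * i%:R = n%:R * G n - \sum_(0 <= i < n) G i.
Proof.
move=> G0; elim: n => [|n IH]; first by rewrite !big_geq // mul0r subrr.
by rewrite big_nat_recr //= IH big_nat_recr //= -natr1; ring.
Qed.

Lemma harmonic_le1 i : harmonic i <= 1 :> R.
Proof. by rewrite /= invf_le1 ?ler1n. Qed.

(** The equal-revenue distribution truncated at [K]: value [i] with [F i = 1 - 1/(i+1)] for
    [i < K], so that every posted price [i <= K] earns revenue exactly 1. *)
Definition eqrev_prob (K j : nat) : R :=
  if (j < K)%N then j%:R^-1 - j.+1%:R^-1 else K%:R^-1.

Lemma cumP_eqrev K i : (i < K)%N -> cumP (eqrev_prob K) i = 1 - harmonic i.
Proof.
elim: i => [|i IH] iK /=; first by rewrite cumP0 invr1 subrr.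
rewrite cumPS IH /=; last exact: ltnW.
by rewrite /eqrev_prob iK; ring.
Qed.

Lemma cumP_eqrevK K : (0 < K)%N -> cumP (eqrev_prob K) K = 1.
Proof. by case: K => // K _; rewrite cumPS cumP_eqrev // /eqrev_prob ltnn /=; ring. Qed.

Lemma admissible_eqrev r K : (0 < K)%N -> K%:R <= r ->
  admissible r K (fun i => i%:R) (eqrev_prob K).
Proof.
move=> K_gt0 Kr; split.
  move=> i /andP[i1 iK]; rewrite /eqrev_prob; case: ifP => _.
    by rewrite subr_gt0 ltf_pV2 ?posrE ?ltr0n // ltr_nat.
  by rewrite invr_gt0 ltr0n (leq_trans i1 iK).
split; first exact: cumP_eqrevK.
split; first exact: ltr0Sn.
split; first by move=> i _; rewrite ltr_nat.
by rewrite ?mulr1n mulr1.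
Qed.

Lemma rev_eqrev K k : (1 <= k <= K)%N -> Defs.rev K (fun i => i%:R) (eqrev_prob K) k = 1.
Proof.
case: k => // k /andP[_ kK]; have K_gt0 : (0 < K)%N := leq_trans (ltn0Sn k) kK.
rewrite (revE _ (cumP_eqrevK K_gt0) (leqW kK : (1 <= k.+1 <= K.+1)%N)) /=.
by rewrite cumP_eqrev // opprB addrC subrK /= mulfV ?pnatr_eq0.
Qed.

Lemma reserve_eqrev K : (0 < K)%N -> reserve K (fun i => i%:R) (eqrev_prob K) = K.
Proof.
move=> K_gt0; apply: reserve_eq; split; first by rewrite K_gt0 leqnn.
  by move=> k kK; rewrite !rev_eqrev ?K_gt0 ?leqnn ?lexx.
by move=> k /andP[Kk kK]; move: (leq_trans Kk kK); rewrite ltnn.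
Qed.

Lemma welfare_eqrev_ge N K : (0 < N)%N -> (0 < K)%N ->
  series harmonic K <= welfare_below N (fun i => i%:R) (eqrev_prob K) K.+1.
Proof.
move=> N_gt0 K_gt0.
rewrite /welfare_below (summation_by_parts_natr (G := fun i => cumP (eqrev_prob K) i ^+ N)) /=.
  2: by rewrite cumP0 expr0n gtn_eqF.
rewrite cumP_eqrevK // expr1n mulr1 lerBrDr addrC -lerBrDr.
have -> : K%:R - series harmonic K = \sum_(0 <= i < K) (1 - harmonic i) :> R.
  by rewrite sumrB /series /= sumr_const_nat subn0.
rewrite big_nat_cond [leRHS]big_nat_cond; apply: ler_sum => i /andP[/andP[_ iK] _].
have c_ge0 : 0 <= 1 - @harmonic R i by rewrite subr_ge0 harmonic_le1.
have c_le1 : 1 - @harmonic R i <= 1 by rewrite lerBlDr lerDl harmonic_ge0.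
rewrite cumP_eqrev // -(prednK N_gt0) exprS.
by apply: ler_piMr; [exact: c_ge0 | exact: exprn_ile1].
Qed.

Lemma zcoef_eqrev_top N K : (0 < K)%N -> zcoef N (eqrev_prob K) K * K%:R <= N%:R.
Proof.
case: K => // K _; rewrite /zcoef cumP_eqrevK //= cumP_eqrev // expr1n.
have c01 : 0 <= 1 - @harmonic R K <= 1.
  by rewrite subr_ge0 harmonic_le1 lerBlDr lerDl harmonic_ge0.
apply: le_trans (ler_wpM2r (ler0n _ _) (bernoulli_le N c01)) _.
by rewrite opprB addrC subrK /= -mulrA mulVf ?pnatr_eq0 // mulr1.
Qed.

Lemma ELR_eqrev_ge N K : (0 < N)%N -> (0 < K)%N ->
  1 - N%:R / series harmonic K <= ELR K N (fun i => i%:R) (eqrev_prob K).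
Proof.
move=> N_gt0 K_gt0; rewrite ELRE reserve_eqrev //.
have H_gt0 : 0 < series (@harmonic R) K.
  case: K K_gt0 => // K _; rewrite /series /= big_nat_recl //=.
  by apply: ltr_pwDl; [exact: harmonic_gt0 | apply: sumr_ge0 => i _; exact: harmonic_ge0].
have D_ge := welfare_eqrev_ge N_gt0 K_gt0.
set D := welfare_below N _ _ K.+1 in D_ge *.
have D_gt0 : 0 < D := lt_le_trans H_gt0 D_ge.
have -> : welfare_below N (fun i => i%:R) (eqrev_prob K) K = D - zcoef N (eqrev_prob K) K * K%:R.
  by rewrite /D welfare_belowS // addrK.
rewrite mulrBl mulfV ?gt_eqF // lerB //.
apply: le_trans (ler_wpM2r _ (zcoef_eqrev_top N K_gt0)) _; first by rewrite invr_ge0 ltW.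
apply: ler_wpM2l; first exact: ler0n.
by rewrite lef_pV2 ?posrE.
Qed.

Lemma etaELR_ge_harmonic r K N : (0 < N)%N -> (0 < K)%N -> K%:R <= r ->
  1 - N%:R / series harmonic K <= etaELR r K N.
Proof.
move=> N_gt0 K_gt0 Kr.
exact: le_trans (ELR_eqrev_ge N_gt0 K_gt0) (etaELR_ge N (admissible_eqrev K_gt0 Kr)).
Qed.

End EqualRevenue.

Section LimitInK.
Variable R : realType.
Implicit Types r : R.

Lemma etaELR_nondecreasing r N : nondecreasing_seq (fun K => etaELR r K N).
Proof.
apply/nondecreasing_seqP => K; apply: etaELR_le; first exact: etaELR_ge0.
move=> x p adm; have [t_gt1|t_le1] := ltnP 1 (reserve K x p).
  have [x' [p' [adm' le]]] := ELR_le_split N adm t_gt1.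
  exact: le_trans le (etaELR_ge N adm').
by rewrite ELRE /welfare_below big_geq // mul0r etaELR_ge0.
Qed.

Lemma etaELR_cvgn r N : cvgn (fun K => etaELR r K N).
Proof.
apply: nondecreasing_is_cvgn; first exact: etaELR_nondecreasing.
by exists 1 => _ [K _ <-]; exact: etaELR_le1.
Qed.

Lemma lim_etaELR_cvg1 N : (0 < N)%N -> limn (fun K => etaELR r K N) @[r --> +oo] --> (1 : R).
Proof.
move=> N_gt0; apply/cvgrPdist_le => eps eps_gt0.
have H_nd : nondecreasing_seq (series (@harmonic R)).
  by apply: nondecreasing_series => n _ _; exact: harmonic_ge0.
have /cvgryPge/(_ (N%:R / eps)) H_ge := nondecreasing_dvgn_lt H_nd (@dvg_harmonic R).
have [K [K_gt0 HK]] : exists K, (0 < K)%N /\ N%:R / eps <= series (@harmonic R) K.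
  by near \oo => K; exists K; split; near: K; [exact: nbhs_infty_gt | exact: H_ge].
have H_gt0 : 0 < series (@harmonic R) K by apply: lt_le_trans HK; rewrite divr_gt0 // ltr0n.
near=> r.
have lim_le1 : limn (fun K => etaELR r K N) <= 1.
  by apply: limr_le; [exact: etaELR_cvgn | apply: nearW => K'; exact: etaELR_le1].
have lim_ge : 1 - N%:R / series harmonic K <= limn (fun K => etaELR r K N).
  apply: le_trans (etaELR_ge_harmonic (r := r) N_gt0 K_gt0 _) _.
    by near: r; apply: nbhs_pinfty_ge; rewrite num_real.
  apply: limr_ge; first exact: etaELR_cvgn.
  by near=> K'; apply: etaELR_nondecreasing; near: K'; exact: nbhs_infty_ge.
rewrite ger0_norm ?subr_ge0 // lerBlDr -lerBlDl; apply: le_trans _ lim_ge.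
by rewrite lerB // ler_pdivrMr // mulrC -ler_pdivrMr.
Unshelve. all: by end_near. Qed.

End LimitInK.

Theorem corollary3 (R : realType) :
  (* (i) *)
  (forall (r : R) (N : nat), 1 < r -> (1 <= N)%N ->
     (fun K : nat => Ub r K N - Lb r K N) @ \oo --> 0) /\
  (* (ii) *)
  (forall (r : R) (K : nat), 1 < r -> (2 < K)%N ->
     (fun N : nat => etaELR r K N) @ \oo --> 0) /\
  (* (iii) *)
  (forall N : nat, (1 <= N)%N ->
     (forall r : R, 1 < r -> cvgn (fun K : nat => etaELR r K N)) /\
     (fun r : R => limn (fun K : nat => etaELR r K N)) @ +oo --> (1 : R)) /\
  (* (iv) *)
  (forall (r : R) (K : nat), 1 < r -> (2 < K)%N ->
     (fun N : nat => etaELR r K N) =O_\oo (fun N : nat => (1 - r^-1) ^+ N)).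
Proof.
split; first by move=> r N r1 N_gt0; exact: Ub_sub_Lb_cvg0.
split; first by move=> r K r1 _; exact: etaELR_cvg0.
split; first by move=> N N_gt0; split=> [r _|]; [exact: etaELR_cvgn | exact: lim_etaELR_cvg1].
by move=> r K r1 _; exact: etaELR_bigO.
Qed.
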